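(* For each integer $\mu\geq 2$ there exists a large set with multiplicity LS$(3,4,10;\mu)$.
   Context: A Steiner system S$(t,k,n)$ is a pair $(Q,B)$ where $Q$ is an $n$-set and $B$ is a collection of $k$-subsets (blocks) of $Q$ such that every $t$-subset of $Q$ is contained in exactly one block. A large set with multiplicity $\mu$, LS$(t,k,n;\mu)$, is a family (the same system may occur more than once) of Steiner systems S$(t,k,n)$ on a common $n$-set $Q$ such that every $k$-subset of $Q$ is a block of exactly $\mu$ of the systems. *)

From mathcomp Require Import all_boot.
Unset Printing Implicit Defensive.

Definition steiner_system (t k n : nat) (B : {set {set 'I_n}}) : Prop :=
  (forall b, b \in B -> #|b| = k) /\
  (forall T : {set 'I_n}, #|T| = t -> #|[set b in B | T \subset b]| = 1).

(* A large set with multiplicity mu, LS(t,k,n;mu): a family (repetitions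
   allowed, hence a list) of Steiner systems S(t,k,n) on the common n-set
   'I_n such that every k-subset of 'I_n is a block of exactly mu of them
   (counted with multiplicity). *)
Definition large_set_mult (t k n mu : nat) (L : seq {set {set 'I_n}}) : Prop :=
  (forall B, B \in L -> steiner_system t k n B) /\
  (forall K : {set 'I_n}, #|K| = k -> count (fun B : {set {set 'I_n}} => K \in B) L = mu).

From mathcomp Require Import all_boot.
Unset Printing Implicit Defensive.

(* Every mu >= 2 is a sum of 2s and 3s, and concatenating large sets adds
   their multiplicities, so it suffices to exhibit an LS(3,4,10;2) and an
   LS(3,4,10;3).  Both are given explicitly, with blocks as sorted lists of
   points, and verified by evaluating a boolean test proved to imply the
   defining properties. *)

Lemma large_set_mult_cat t k n m1 m2 L1 L2 :
  large_set_mult t k n m1 L1 -> large_set_mult t k n m2 L2 ->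
  large_set_mult t k n (m1 + m2) (L1 ++ L2).
Proof.
move=> [sys1 count1] [sys2 count2]; split.
  by move=> B; rewrite mem_cat => /orP[/sys1|/sys2].
by move=> K cardK; rewrite count_cat count1 // count2.
Qed.

Lemma large_set_mult_ge2 t k n :
  (exists L, large_set_mult t k n 2 L) -> (exists L, large_set_mult t k n 3 L) ->
  forall mu, 2 <= mu -> exists L, large_set_mult t k n mu L.
Proof.
move=> [L2 LS2] [L3 LS3]; elim/ltn_ind => -[|[|[|[|m]]]] // IH _.
- by exists L2.
- by exists L3.
have [L LSm] := IH m.+2 (leqnSn _) isT.
by exists (L ++ L2); rewrite -addn2; apply: large_set_mult_cat.
Qed.

Fixpoint subseqs_of_size {T : Type} (k : nat) (s : seq T) {struct s} : seq (seq T) :=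
  match k, s with
  | 0, _ => [:: [::]]
  | _.+1, [::] => [::]
  | k'.+1, x :: s' => map (cons x) (subseqs_of_size k' s') ++ subseqs_of_size k s'
  end.

Lemma mem_subseqs_of_size (T : eqType) k (s u : seq T) :
  (u \in subseqs_of_size k s) = subseq u s && (size u == k).
Proof.
elim: s k u => [|x s IH] [|k] [|y u] //=; rewrite ?inE ?andbF // mem_cat IH.
  by rewrite andbF orbF; apply/mapP => -[].
case: (eqVneq y x) => [->|ne_yx].
  have cons_inj : injective (cons x) by move=> v w [].
  rewrite (mem_map cons_inj) IH eqSS.
  by apply/orb_idr => /andP[/(subseq_trans (subseq_cons u x)) -> ->].
have /negPf-> // : y :: u \notin [seq x :: v | v <- subseqs_of_size k s].
by apply/mapP => -[v _ [/eqP]]; rewrite (negPf ne_yx).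
Qed.

Section Encoding.
Variable n : nat.

Definition set_of_seq (s : seq nat) : {set 'I_n} := [set i : 'I_n | val i \in s].
Definition seq_of_set (A : {set 'I_n}) : seq nat := [seq val i | i <- enum A].

Lemma seq_of_setK : cancel seq_of_set set_of_seq.
Proof. by move=> A; apply/setP => i; rewrite inE mem_map ?mem_enum //; apply: val_inj. Qed.

Lemma size_seq_of_set A : size (seq_of_set A) = #|A|.
Proof. by rewrite size_map cardE. Qed.

Lemma subseq_seq_of_set A : subseq (seq_of_set A) (iota 0 n).
Proof.
by rewrite -val_enum_ord map_subseq // {1}/enum_mem -enumT filter_subseq.
Qed.

Definition sorted_points : {pred seq nat} := fun s => subseq s (iota 0 n).

Lemma set_of_seqK : {in sorted_points, cancel set_of_seq seq_of_set}.
Proof.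
move=> s s_pts; have ltn_sorted := subseq_sorted ltn_trans _ (iota_ltn_sorted 0 n).
apply: (irr_sorted_eq ltn_trans ltnn); rewrite ?ltn_sorted ?subseq_seq_of_set //.
move=> x; apply/mapP/idP => [[i] | xs]; first by rewrite mem_enum inE => + ->.
have := mem_subseq s_pts xs; rewrite mem_iota add0n => ltxn.
by exists (Ordinal ltxn); rewrite ?mem_enum ?inE.
Qed.

Lemma set_of_seq_inj : {in sorted_points &, injective set_of_seq}.
Proof. exact: can_in_inj set_of_seqK. Qed.

Lemma card_set_of_seq s : s \in sorted_points -> #|set_of_seq s| = size s.
Proof. by move=> s_pts; rewrite -size_seq_of_set set_of_seqK. Qed.

Lemma subset_set_of_seq s u : s \in sorted_points ->
  (set_of_seq s \subset set_of_seq u) = all (mem u) s.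
Proof.
move=> s_pts; apply/subsetP/allP => [sub_su x xs | sub_su i].
  have := mem_subseq s_pts xs; rewrite mem_iota add0n => ltxn.
  by have := sub_su (Ordinal ltxn); rewrite !inE; apply.
by rewrite !inE => /sub_su.
Qed.

Definition system_of_seqs (S : seq (seq nat)) : {set {set 'I_n}} :=
  [set A in map set_of_seq S].

Lemma card_system_of_seqs_filter S (P : pred {set 'I_n}) :
  uniq S -> {subset S <= sorted_points} ->
  #|[set b in system_of_seqs S | P b]| = count (P \o set_of_seq) S.
Proof.
move=> uniqS S_pts; rewrite -count_map -size_filter.
have uniq_mapS : uniq (map set_of_seq S).
  by rewrite (map_inj_in_uniq (sub_in2 S_pts set_of_seq_inj)).
rewrite -(card_uniqP (filter_uniq P uniq_mapS)).
by apply: eq_card => A; rewrite !inE mem_filter andbC.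
Qed.

Lemma mem_system_of_seqs S s : {subset S <= sorted_points} -> s \in sorted_points ->
  (set_of_seq s \in system_of_seqs S) = (s \in S).
Proof.
move=> S_pts s_pts; rewrite inE; apply/mapP/idP => [[u uS eq_su] | sS]; last by exists s.
by rewrite (set_of_seq_inj _ _ s_pts (S_pts u uS) eq_su).
Qed.

Lemma set_of_seq_subseqs_of_size {k} {A : {set 'I_n}} : #|A| = k ->
  exists2 s, s \in subseqs_of_size k (iota 0 n) & A = set_of_seq s.
Proof.
move=> cardA; exists (seq_of_set A); last by rewrite seq_of_setK.
by rewrite mem_subseqs_of_size subseq_seq_of_set size_seq_of_set cardA /=.
Qed.

Variables t k : nat.

Definition steiner_systemb (S : seq (seq nat)) : bool :=
  [&& uniq S, all (fun b => (b \in sorted_points) && (size b == k)) S &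
      all (fun T => count (fun b => all (mem b) T) S == 1) (subseqs_of_size t (iota 0 n))].

Lemma steiner_systemb_sound S :
  steiner_systemb S -> steiner_system t k n (system_of_seqs S).
Proof.
case/and3P => uniqS /allP blocksS /allP countS.
have S_pts : {subset S <= sorted_points}.
  by move=> b /blocksS /andP[].
split=> [A | T cardT].
  rewrite inE => /mapP[b bS ->].
  by have /andP[b_pts /eqP <-] := blocksS b bS; apply: card_set_of_seq.
have [s sT ->] := set_of_seq_subseqs_of_size cardT.
have s_pts : s \in sorted_points by move: sT; rewrite mem_subseqs_of_size => /andP[].
rewrite card_system_of_seqs_filter // -(eqP (countS s sT)).
by apply: eq_count => b /=; rewrite subset_set_of_seq.
Qed.

Definition large_set_multb mu (L : seq (seq (seq nat))) : bool :=
  all steiner_systemb L &&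
  all (fun K => count (fun S => K \in S) L == mu) (subseqs_of_size k (iota 0 n)).

Lemma large_set_multb_sound mu L :
  large_set_multb mu L -> large_set_mult t k n mu (map system_of_seqs L).
Proof.
case/andP => /allP systemsL /allP countL; split=> [_ /mapP[S SL ->] | K cardK].
  exact/steiner_systemb_sound/systemsL.
have [s sK ->] := set_of_seq_subseqs_of_size cardK.
have s_pts : s \in sorted_points by move: sK; rewrite mem_subseqs_of_size => /andP[].
rewrite count_map -(eqP (countL s sK)); apply: eq_in_count => S SL /=.
apply: mem_system_of_seqs => // b bS.
by have /and3P[_ /allP/(_ b bS)/andP[]] := systemsL S SL.
Qed.

End Encoding.

Definition ls_3_4_10_mu2 : seq (seq (seq nat)) :=
[:: [:: [:: 0; 1; 2; 9]; [:: 0; 1; 3; 7]; [:: 0; 1; 4; 6]; [:: 0; 1; 5; 8]; [:: 0; 2; 3; 4]; [:: 0; 2; 5; 6]; [:: 0; 2; 7; 8]; [:: 0; 3; 5; 9]; [:: 0; 3; 6; 8]; [:: 0; 4; 5; 7]; [:: 0; 4; 8; 9]; [:: 0; 6; 7; 9]; [:: 1; 2; 3; 5]; [:: 1; 2; 4; 7]; [:: 1; 2; 6; 8]; [:: 1; 3; 4; 8]; [:: 1; 3; 6; 9]; [:: 1; 4; 5; 9]; [:: 1; 5; 6; 7]; [:: 1; 7; 8; 9]; [:: 2; 3; 6; 7]; [:: 2; 3; 8; 9]; [:: 2; 4; 5; 8]; [:: 2; 4; 6; 9]; [:: 2; 5; 7; 9]; [:: 3; 4; 5; 6]; [:: 3;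 4; 7; 9]; [:: 3; 5; 7; 8]; [:: 4; 6; 7; 8]; [:: 5; 6; 8; 9]];
 [:: [:: 0; 1; 2; 3]; [:: 0; 1; 4; 9]; [:: 0; 1; 5; 8]; [:: 0; 1; 6; 7]; [:: 0; 2; 4; 7]; [:: 0; 2; 5; 9]; [:: 0; 2; 6; 8]; [:: 0; 3; 4; 8]; [:: 0; 3; 5; 7]; [:: 0; 3; 6; 9]; [:: 0; 4; 5; 6]; [:: 0; 7; 8; 9]; [:: 1; 2; 4; 5]; [:: 1; 2; 6; 9]; [:: 1; 2; 7; 8]; [:: 1; 3; 4; 7]; [:: 1; 3; 5; 6]; [:: 1; 3; 8; 9]; [:: 1; 4; 6; 8]; [:: 1; 5; 7; 9]; [:: 2; 3; 4; 6]; [:: 2; 3; 5; 8]; [:: 2; 3; 7; 9]; [:: 2; 4; 8; 9]; [:: 2; 5; 6; 7]; [:: 3; 4; 5; 9]; [:: 3; 6; 7; 8]; [:: 4; 5; 7; 8]; [:: 4; 6; 7; 9]; [:: 5; 6; 8; 9]];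
 [:: [:: 0; 1; 2; 3]; [:: 0; 1; 4; 8]; [:: 0; 1; 5; 7]; [:: 0; 1; 6; 9]; [:: 0; 2; 4; 5]; [:: 0; 2; 6; 8]; [:: 0; 2; 7; 9]; [:: 0; 3; 4; 9]; [:: 0; 3; 5; 6]; [:: 0; 3; 7; 8]; [:: 0; 4; 6; 7]; [:: 0; 5; 8; 9]; [:: 1; 2; 4; 7]; [:: 1; 2; 5; 6]; [:: 1; 2; 8; 9]; [:: 1; 3; 4; 6]; [:: 1; 3; 5; 8]; [:: 1; 3; 7; 9]; [:: 1; 4; 5; 9]; [:: 1; 6; 7; 8]; [:: 2; 3; 4; 8]; [:: 2; 3; 5; 9]; [:: 2; 3; 6; 7]; [:: 2; 4; 6; 9]; [:: 2; 5; 7; 8]; [:: 3; 4; 5; 7]; [:: 3; 6; 8; 9]; [:: 4; 5; 6; 8]; [:: 4; 7; 8; 9]; [:: 5; 6; 7; 9]];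
 [:: [:: 0; 1; 2; 8]; [:: 0; 1; 3; 7]; [:: 0; 1; 4; 5]; [:: 0; 1; 6; 9]; [:: 0; 2; 3; 5]; [:: 0; 2; 4; 9]; [:: 0; 2; 6; 7]; [:: 0; 3; 4; 6]; [:: 0; 3; 8; 9]; [:: 0; 4; 7; 8]; [:: 0; 5; 6; 8]; [:: 0; 5; 7; 9]; [:: 1; 2; 3; 4]; [:: 1; 2; 5; 6]; [:: 1; 2; 7; 9]; [:: 1; 3; 5; 9]; [:: 1; 3; 6; 8]; [:: 1; 4; 6; 7]; [:: 1; 4; 8; 9]; [:: 1; 5; 7; 8]; [:: 2; 3; 6; 9]; [:: 2; 3; 7; 8]; [:: 2; 4; 5; 7]; [:: 2; 4; 6; 8]; [:: 2; 5; 8; 9]; [:: 3; 4; 5; 8]; [:: 3; 4; 7; 9]; [:: 3; 5; 6; 7]; [:: 4; 5; 6; 9]; [:: 6; 7; 8; 9]];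
 [:: [:: 0; 1; 2; 4]; [:: 0; 1; 3; 9]; [:: 0; 1; 5; 6]; [:: 0; 1; 7; 8]; [:: 0; 2; 3; 7]; [:: 0; 2; 5; 8]; [:: 0; 2; 6; 9]; [:: 0; 3; 4; 5]; [:: 0; 3; 6; 8]; [:: 0; 4; 6; 7]; [:: 0; 4; 8; 9]; [:: 0; 5; 7; 9]; [:: 1; 2; 3; 8]; [:: 1; 2; 5; 9]; [:: 1; 2; 6; 7]; [:: 1; 3; 4; 6]; [:: 1; 3; 5; 7]; [:: 1; 4; 5; 8]; [:: 1; 4; 7; 9]; [:: 1; 6; 8; 9]; [:: 2; 3; 4; 9]; [:: 2; 3; 5; 6]; [:: 2; 4; 5; 7]; [:: 2; 4; 6; 8]; [:: 2; 7; 8; 9]; [:: 3; 4; 7; 8]; [:: 3; 5; 8; 9]; [:: 3; 6; 7; 9]; [:: 4; 5; 6; 9]; [:: 5; 6; 7; 8]];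
 [:: [:: 0; 1; 2; 5]; [:: 0; 1; 3; 4]; [:: 0; 1; 6; 7]; [:: 0; 1; 8; 9]; [:: 0; 2; 3; 6]; [:: 0; 2; 4; 8]; [:: 0; 2; 7; 9]; [:: 0; 3; 5; 9]; [:: 0; 3; 7; 8]; [:: 0; 4; 5; 7]; [:: 0; 4; 6; 9]; [:: 0; 5; 6; 8]; [:: 1; 2; 3; 9]; [:: 1; 2; 4; 6]; [:: 1; 2; 7; 8]; [:: 1; 3; 5; 7]; [:: 1; 3; 6; 8]; [:: 1; 4; 5; 8]; [:: 1; 4; 7; 9]; [:: 1; 5; 6; 9]; [:: 2; 3; 4; 7]; [:: 2; 3; 5; 8]; [:: 2; 4; 5; 9]; [:: 2; 5; 6; 7]; [:: 2; 6; 8; 9]; [:: 3; 4; 5; 6]; [:: 3; 4; 8; 9]; [:: 3; 6; 7; 9]; [:: 4; 6; 7; 8]; [:: 5; 7; 8; 9]];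
 [:: [:: 0; 1; 2; 6]; [:: 0; 1; 3; 8]; [:: 0; 1; 4; 7]; [:: 0; 1; 5; 9]; [:: 0; 2; 3; 4]; [:: 0; 2; 5; 7]; [:: 0; 2; 8; 9]; [:: 0; 3; 5; 6]; [:: 0; 3; 7; 9]; [:: 0; 4; 5; 8]; [:: 0; 4; 6; 9]; [:: 0; 6; 7; 8]; [:: 1; 2; 3; 5]; [:: 1; 2; 4; 8]; [:: 1; 2; 7; 9]; [:: 1; 3; 4; 9]; [:: 1; 3; 6; 7]; [:: 1; 4; 5; 6]; [:: 1; 5; 7; 8]; [:: 1; 6; 8; 9]; [:: 2; 3; 6; 9]; [:: 2; 3; 7; 8]; [:: 2; 4; 5; 9]; [:: 2; 4; 6; 7]; [:: 2; 5; 6; 8]; [:: 3; 4; 5; 7]; [:: 3; 4; 6; 8]; [:: 3; 5; 8; 9]; [:: 4; 7; 8; 9]; [:: 5; 6; 7; 9]];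
 [:: [:: 0; 1; 2; 4]; [:: 0; 1; 3; 6]; [:: 0; 1; 5; 7]; [:: 0; 1; 8; 9]; [:: 0; 2; 3; 9]; [:: 0; 2; 5; 6]; [:: 0; 2; 7; 8]; [:: 0; 3; 4; 7]; [:: 0; 3; 5; 8]; [:: 0; 4; 5; 9]; [:: 0; 4; 6; 8]; [:: 0; 6; 7; 9]; [:: 1; 2; 3; 8]; [:: 1; 2; 5; 9]; [:: 1; 2; 6; 7]; [:: 1; 3; 4; 5]; [:: 1; 3; 7; 9]; [:: 1; 4; 6; 9]; [:: 1; 4; 7; 8]; [:: 1; 5; 6; 8]; [:: 2; 3; 4; 6]; [:: 2; 3; 5; 7]; [:: 2; 4; 5; 8]; [:: 2; 4; 7; 9]; [:: 2; 6; 8; 9]; [:: 3; 4; 8; 9]; [:: 3; 5; 6; 9]; [:: 3; 6; 7; 8]; [:: 4; 5; 6; 7]; [:: 5; 7; 8; 9]];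
 [:: [:: 0; 1; 2; 5]; [:: 0; 1; 3; 8]; [:: 0; 1; 4; 6]; [:: 0; 1; 7; 9]; [:: 0; 2; 3; 6]; [:: 0; 2; 4; 7]; [:: 0; 2; 8; 9]; [:: 0; 3; 4; 9]; [:: 0; 3; 5; 7]; [:: 0; 4; 5; 8]; [:: 0; 5; 6; 9]; [:: 0; 6; 7; 8]; [:: 1; 2; 3; 7]; [:: 1; 2; 4; 9]; [:: 1; 2; 6; 8]; [:: 1; 3; 4; 5]; [:: 1; 3; 6; 9]; [:: 1; 4; 7; 8]; [:: 1; 5; 6; 7]; [:: 1; 5; 8; 9]; [:: 2; 3; 4; 8]; [:: 2; 3; 5; 9]; [:: 2; 4; 5; 6]; [:: 2; 5; 7; 8]; [:: 2; 6; 7; 9]; [:: 3; 4; 6; 7]; [:: 3; 5; 6; 8]; [:: 3; 7; 8; 9]; [:: 4; 5; 7; 9]; [:: 4; 6; 8; 9]];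
 [:: [:: 0; 1; 2; 6]; [:: 0; 1; 3; 4]; [:: 0; 1; 5; 9]; [:: 0; 1; 7; 8]; [:: 0; 2; 3; 9]; [:: 0; 2; 4; 8]; [:: 0; 2; 5; 7]; [:: 0; 3; 5; 8]; [:: 0; 3; 6; 7]; [:: 0; 4; 5; 6]; [:: 0; 4; 7; 9]; [:: 0; 6; 8; 9]; [:: 1; 2; 3; 7]; [:: 1; 2; 4; 9]; [:: 1; 2; 5; 8]; [:: 1; 3; 5; 6]; [:: 1; 3; 8; 9]; [:: 1; 4; 5; 7]; [:: 1; 4; 6; 8]; [:: 1; 6; 7; 9]; [:: 2; 3; 4; 5]; [:: 2; 3; 6; 8]; [:: 2; 4; 6; 7]; [:: 2; 5; 6; 9]; [:: 2; 7; 8; 9]; [:: 3; 4; 6; 9]; [:: 3; 4; 7; 8]; [:: 3; 5; 7; 9]; [:: 4; 5; 8; 9]; [:: 5; 6; 7; 8]];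
 [:: [:: 0; 1; 2; 8]; [:: 0; 1; 3; 6]; [:: 0; 1; 4; 5]; [:: 0; 1; 7; 9]; [:: 0; 2; 3; 5]; [:: 0; 2; 4; 9]; [:: 0; 2; 6; 7]; [:: 0; 3; 4; 7]; [:: 0; 3; 8; 9]; [:: 0; 4; 6; 8]; [:: 0; 5; 6; 9]; [:: 0; 5; 7; 8]; [:: 1; 2; 3; 4]; [:: 1; 2; 5; 7]; [:: 1; 2; 6; 9]; [:: 1; 3; 5; 9]; [:: 1; 3; 7; 8]; [:: 1; 4; 6; 7]; [:: 1; 4; 8; 9]; [:: 1; 5; 6; 8]; [:: 2; 3; 6; 8]; [:: 2; 3; 7; 9]; [:: 2; 4; 5; 6]; [:: 2; 4; 7; 8]; [:: 2; 5; 8; 9]; [:: 3; 4; 5; 8]; [:: 3; 4; 6; 9]; [:: 3; 5; 6; 7]; [:: 4; 5; 7; 9]; [:: 6; 7; 8; 9]];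
 [:: [:: 0; 1; 2; 9]; [:: 0; 1; 3; 5]; [:: 0; 1; 4; 7]; [:: 0; 1; 6; 8]; [:: 0; 2; 3; 7]; [:: 0; 2; 4; 6]; [:: 0; 2; 5; 8]; [:: 0; 3; 4; 8]; [:: 0; 3; 6; 9]; [:: 0; 4; 5; 9]; [:: 0; 5; 6; 7]; [:: 0; 7; 8; 9]; [:: 1; 2; 3; 6]; [:: 1; 2; 4; 8]; [:: 1; 2; 5; 7]; [:: 1; 3; 4; 9]; [:: 1; 3; 7; 8]; [:: 1; 4; 5; 6]; [:: 1; 5; 8; 9]; [:: 1; 6; 7; 9]; [:: 2; 3; 4; 5]; [:: 2; 3; 8; 9]; [:: 2; 4; 7; 9]; [:: 2; 5; 6; 9]; [:: 2; 6; 7; 8]; [:: 3; 4; 6; 7]; [:: 3; 5; 6; 8]; [:: 3; 5; 7; 9]; [:: 4; 5; 7; 8]; [:: 4; 6; 8; 9]];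
 [:: [:: 0; 1; 2; 7]; [:: 0; 1; 3; 5]; [:: 0; 1; 4; 9]; [:: 0; 1; 6; 8]; [:: 0; 2; 3; 8]; [:: 0; 2; 4; 5]; [:: 0; 2; 6; 9]; [:: 0; 3; 4; 6]; [:: 0; 3; 7; 9]; [:: 0; 4; 7; 8]; [:: 0; 5; 6; 7]; [:: 0; 5; 8; 9]; [:: 1; 2; 3; 9]; [:: 1; 2; 4; 6]; [:: 1; 2; 5; 8]; [:: 1; 3; 4; 8]; [:: 1; 3; 6; 7]; [:: 1; 4; 5; 7]; [:: 1; 5; 6; 9]; [:: 1; 7; 8; 9]; [:: 2; 3; 4; 7]; [:: 2; 3; 5; 6]; [:: 2; 4; 8; 9]; [:: 2; 5; 7; 9]; [:: 2; 6; 7; 8]; [:: 3; 4; 5; 9]; [:: 3; 5; 7; 8]; [:: 3; 6; 8; 9]; [:: 4; 5; 6; 8]; [:: 4; 6; 7; 9]];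
 [:: [:: 0; 1; 2; 7]; [:: 0; 1; 3; 9]; [:: 0; 1; 4; 8]; [:: 0; 1; 5; 6]; [:: 0; 2; 3; 8]; [:: 0; 2; 4; 6]; [:: 0; 2; 5; 9]; [:: 0; 3; 4; 5]; [:: 0; 3; 6; 7]; [:: 0; 4; 7; 9]; [:: 0; 5; 7; 8]; [:: 0; 6; 8; 9]; [:: 1; 2; 3; 6]; [:: 1; 2; 4; 5]; [:: 1; 2; 8; 9]; [:: 1; 3; 4; 7]; [:: 1; 3; 5; 8]; [:: 1; 4; 6; 9]; [:: 1; 5; 7; 9]; [:: 1; 6; 7; 8]; [:: 2; 3; 4; 9]; [:: 2; 3; 5; 7]; [:: 2; 4; 7; 8]; [:: 2; 5; 6; 8]; [:: 2; 6; 7; 9]; [:: 3; 4; 6; 8]; [:: 3; 5; 6; 9]; [:: 3; 7; 8; 9]; [:: 4; 5; 6; 7]; [:: 4; 5; 8; 9]]].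

Definition ls_3_4_10_mu3 : seq (seq (seq nat)) :=
[:: [:: [:: 0; 1; 2; 9]; [:: 0; 1; 3; 7]; [:: 0; 1; 4; 6]; [:: 0; 1; 5; 8]; [:: 0; 2; 3; 6]; [:: 0; 2; 4; 5]; [:: 0; 2; 7; 8]; [:: 0; 3; 4; 8]; [:: 0; 3; 5; 9]; [:: 0; 4; 7; 9]; [:: 0; 5; 6; 7]; [:: 0; 6; 8; 9]; [:: 1; 2; 3; 5]; [:: 1; 2; 4; 8]; [:: 1; 2; 6; 7]; [:: 1; 3; 4; 9]; [:: 1; 3; 6; 8]; [:: 1; 4; 5; 7]; [:: 1; 5; 6; 9]; [:: 1; 7; 8; 9]; [:: 2; 3; 4; 7]; [:: 2; 3; 8; 9]; [:: 2; 4; 6; 9]; [:: 2; 5; 6; 8]; [:: 2; 5; 7; 9]; [:: 3; 4; 5; 6]; [:: 3; 5; 7; 8]; [:: 3; 6; 7; 9]; [:: 4; 5; 8; 9]; [:: 4; 6; 7; 8]];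
 [:: [:: 0; 1; 2; 5]; [:: 0; 1; 3; 4]; [:: 0; 1; 6; 7]; [:: 0; 1; 8; 9]; [:: 0; 2; 3; 7]; [:: 0; 2; 4; 8]; [:: 0; 2; 6; 9]; [:: 0; 3; 5; 9]; [:: 0; 3; 6; 8]; [:: 0; 4; 5; 6]; [:: 0; 4; 7; 9]; [:: 0; 5; 7; 8]; [:: 1; 2; 3; 9]; [:: 1; 2; 4; 7]; [:: 1; 2; 6; 8]; [:: 1; 3; 5; 6]; [:: 1; 3; 7; 8]; [:: 1; 4; 5; 8]; [:: 1; 4; 6; 9]; [:: 1; 5; 7; 9]; [:: 2; 3; 4; 6]; [:: 2; 3; 5; 8]; [:: 2; 4; 5; 9]; [:: 2; 5; 6; 7]; [:: 2; 7; 8; 9]; [:: 3; 4; 5; 7]; [:: 3; 4; 8; 9]; [:: 3; 6; 7; 9]; [:: 4; 6; 7; 8]; [:: 5; 6; 8; 9]];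
 [:: [:: 0; 1; 2; 7]; [:: 0; 1; 3; 9]; [:: 0; 1; 4; 8]; [:: 0; 1; 5; 6]; [:: 0; 2; 3; 8]; [:: 0; 2; 4; 6]; [:: 0; 2; 5; 9]; [:: 0; 3; 4; 5]; [:: 0; 3; 6; 7]; [:: 0; 4; 7; 9]; [:: 0; 5; 7; 8]; [:: 0; 6; 8; 9]; [:: 1; 2; 3; 6]; [:: 1; 2; 4; 5]; [:: 1; 2; 8; 9]; [:: 1; 3; 4; 7]; [:: 1; 3; 5; 8]; [:: 1; 4; 6; 9]; [:: 1; 5; 7; 9]; [:: 1; 6; 7; 8]; [:: 2; 3; 4; 9]; [:: 2; 3; 5; 7]; [:: 2; 4; 7; 8]; [:: 2; 5; 6; 8]; [:: 2; 6; 7; 9]; [:: 3; 4; 6; 8]; [:: 3; 5; 6; 9]; [:: 3; 7; 8; 9]; [:: 4; 5; 6; 7]; [:: 4; 5; 8; 9]];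
 [:: [:: 0; 1; 2; 6]; [:: 0; 1; 3; 5]; [:: 0; 1; 4; 7]; [:: 0; 1; 8; 9]; [:: 0; 2; 3; 4]; [:: 0; 2; 5; 9]; [:: 0; 2; 7; 8]; [:: 0; 3; 6; 8]; [:: 0; 3; 7; 9]; [:: 0; 4; 5; 8]; [:: 0; 4; 6; 9]; [:: 0; 5; 6; 7]; [:: 1; 2; 3; 7]; [:: 1; 2; 4; 9]; [:: 1; 2; 5; 8]; [:: 1; 3; 4; 8]; [:: 1; 3; 6; 9]; [:: 1; 4; 5; 6]; [:: 1; 5; 7; 9]; [:: 1; 6; 7; 8]; [:: 2; 3; 5; 6]; [:: 2; 3; 8; 9]; [:: 2; 4; 5; 7]; [:: 2; 4; 6; 8]; [:: 2; 6; 7; 9]; [:: 3; 4; 5; 9]; [:: 3; 4; 6; 7]; [:: 3; 5; 7; 8]; [:: 4; 7; 8; 9]; [:: 5; 6; 8; 9]];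
 [:: [:: 0; 1; 2; 3]; [:: 0; 1; 4; 8]; [:: 0; 1; 5; 9]; [:: 0; 1; 6; 7]; [:: 0; 2; 4; 9]; [:: 0; 2; 5; 6]; [:: 0; 2; 7; 8]; [:: 0; 3; 4; 6]; [:: 0; 3; 5; 8]; [:: 0; 3; 7; 9]; [:: 0; 4; 5; 7]; [:: 0; 6; 8; 9]; [:: 1; 2; 4; 6]; [:: 1; 2; 5; 7]; [:: 1; 2; 8; 9]; [:: 1; 3; 4; 5]; [:: 1; 3; 6; 9]; [:: 1; 3; 7; 8]; [:: 1; 4; 7; 9]; [:: 1; 5; 6; 8]; [:: 2; 3; 4; 7]; [:: 2; 3; 5; 9]; [:: 2; 3; 6; 8]; [:: 2; 4; 5; 8]; [:: 2; 6; 7; 9]; [:: 3; 4; 8; 9]; [:: 3; 5; 6; 7]; [:: 4; 5; 6; 9]; [:: 4; 6; 7; 8]; [:: 5; 7; 8; 9]];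
 [:: [:: 0; 1; 2; 7]; [:: 0; 1; 3; 6]; [:: 0; 1; 4; 5]; [:: 0; 1; 8; 9]; [:: 0; 2; 3; 5]; [:: 0; 2; 4; 9]; [:: 0; 2; 6; 8]; [:: 0; 3; 4; 8]; [:: 0; 3; 7; 9]; [:: 0; 4; 6; 7]; [:: 0; 5; 6; 9]; [:: 0; 5; 7; 8]; [:: 1; 2; 3; 4]; [:: 1; 2; 5; 8]; [:: 1; 2; 6; 9]; [:: 1; 3; 5; 9]; [:: 1; 3; 7; 8]; [:: 1; 4; 6; 8]; [:: 1; 4; 7; 9]; [:: 1; 5; 6; 7]; [:: 2; 3; 6; 7]; [:: 2; 3; 8; 9]; [:: 2; 4; 5; 6]; [:: 2; 4; 7; 8]; [:: 2; 5; 7; 9]; [:: 3; 4; 5; 7]; [:: 3; 4; 6; 9]; [:: 3; 5; 6; 8]; [:: 4; 5; 8; 9]; [:: 6; 7; 8; 9]];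
 [:: [:: 0; 1; 2; 4]; [:: 0; 1; 3; 8]; [:: 0; 1; 5; 7]; [:: 0; 1; 6; 9]; [:: 0; 2; 3; 9]; [:: 0; 2; 5; 8]; [:: 0; 2; 6; 7]; [:: 0; 3; 4; 7]; [:: 0; 3; 5; 6]; [:: 0; 4; 5; 9]; [:: 0; 4; 6; 8]; [:: 0; 7; 8; 9]; [:: 1; 2; 3; 7]; [:: 1; 2; 5; 6]; [:: 1; 2; 8; 9]; [:: 1; 3; 4; 6]; [:: 1; 3; 5; 9]; [:: 1; 4; 5; 8]; [:: 1; 4; 7; 9]; [:: 1; 6; 7; 8]; [:: 2; 3; 4; 5]; [:: 2; 3; 6; 8]; [:: 2; 4; 6; 9]; [:: 2; 4; 7; 8]; [:: 2; 5; 7; 9]; [:: 3; 4; 8; 9]; [:: 3; 5; 7; 8]; [:: 3; 6; 7; 9]; [:: 4; 5; 6; 7]; [:: 5; 6; 8; 9]];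
 [:: [:: 0; 1; 2; 9]; [:: 0; 1; 3; 8]; [:: 0; 1; 4; 7]; [:: 0; 1; 5; 6]; [:: 0; 2; 3; 7]; [:: 0; 2; 4; 6]; [:: 0; 2; 5; 8]; [:: 0; 3; 4; 5]; [:: 0; 3; 6; 9]; [:: 0; 4; 8; 9]; [:: 0; 5; 7; 9]; [:: 0; 6; 7; 8]; [:: 1; 2; 3; 6]; [:: 1; 2; 4; 5]; [:: 1; 2; 7; 8]; [:: 1; 3; 4; 9]; [:: 1; 3; 5; 7]; [:: 1; 4; 6; 8]; [:: 1; 5; 8; 9]; [:: 1; 6; 7; 9]; [:: 2; 3; 4; 8]; [:: 2; 3; 5; 9]; [:: 2; 4; 7; 9]; [:: 2; 5; 6; 7]; [:: 2; 6; 8; 9]; [:: 3; 4; 6; 7]; [:: 3; 5; 6; 8]; [:: 3; 7; 8; 9]; [:: 4; 5; 6; 9]; [:: 4; 5; 7; 8]];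
 [:: [:: 0; 1; 2; 6]; [:: 0; 1; 3; 5]; [:: 0; 1; 4; 9]; [:: 0; 1; 7; 8]; [:: 0; 2; 3; 4]; [:: 0; 2; 5; 8]; [:: 0; 2; 7; 9]; [:: 0; 3; 6; 7]; [:: 0; 3; 8; 9]; [:: 0; 4; 5; 7]; [:: 0; 4; 6; 8]; [:: 0; 5; 6; 9]; [:: 1; 2; 3; 9]; [:: 1; 2; 4; 8]; [:: 1; 2; 5; 7]; [:: 1; 3; 4; 7]; [:: 1; 3; 6; 8]; [:: 1; 4; 5; 6]; [:: 1; 5; 8; 9]; [:: 1; 6; 7; 9]; [:: 2; 3; 5; 6]; [:: 2; 3; 7; 8]; [:: 2; 4; 5; 9]; [:: 2; 4; 6; 7]; [:: 2; 6; 8; 9]; [:: 3; 4; 5; 8]; [:: 3; 4; 6; 9]; [:: 3; 5; 7; 9]; [:: 4; 7; 8; 9]; [:: 5; 6; 7; 8]];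
 [:: [:: 0; 1; 2; 3]; [:: 0; 1; 4; 7]; [:: 0; 1; 5; 8]; [:: 0; 1; 6; 9]; [:: 0; 2; 4; 8]; [:: 0; 2; 5; 6]; [:: 0; 2; 7; 9]; [:: 0; 3; 4; 6]; [:: 0; 3; 5; 7]; [:: 0; 3; 8; 9]; [:: 0; 4; 5; 9]; [:: 0; 6; 7; 8]; [:: 1; 2; 4; 6]; [:: 1; 2; 5; 9]; [:: 1; 2; 7; 8]; [:: 1; 3; 4; 5]; [:: 1; 3; 6; 8]; [:: 1; 3; 7; 9]; [:: 1; 4; 8; 9]; [:: 1; 5; 6; 7]; [:: 2; 3; 4; 9]; [:: 2; 3; 5; 8]; [:: 2; 3; 6; 7]; [:: 2; 4; 5; 7]; [:: 2; 6; 8; 9]; [:: 3; 4; 7; 8]; [:: 3; 5; 6; 9]; [:: 4; 5; 6; 8]; [:: 4; 6; 7; 9]; [:: 5; 7; 8; 9]];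
 [:: [:: 0; 1; 2; 9]; [:: 0; 1; 3; 6]; [:: 0; 1; 4; 5]; [:: 0; 1; 7; 8]; [:: 0; 2; 3; 5]; [:: 0; 2; 4; 8]; [:: 0; 2; 6; 7]; [:: 0; 3; 4; 7]; [:: 0; 3; 8; 9]; [:: 0; 4; 6; 9]; [:: 0; 5; 6; 8]; [:: 0; 5; 7; 9]; [:: 1; 2; 3; 4]; [:: 1; 2; 5; 7]; [:: 1; 2; 6; 8]; [:: 1; 3; 5; 8]; [:: 1; 3; 7; 9]; [:: 1; 4; 6; 7]; [:: 1; 4; 8; 9]; [:: 1; 5; 6; 9]; [:: 2; 3; 6; 9]; [:: 2; 3; 7; 8]; [:: 2; 4; 5; 6]; [:: 2; 4; 7; 9]; [:: 2; 5; 8; 9]; [:: 3; 4; 5; 9]; [:: 3; 4; 6; 8]; [:: 3; 5; 6; 7]; [:: 4; 5; 7; 8]; [:: 6; 7; 8; 9]];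
 [:: [:: 0; 1; 2; 4]; [:: 0; 1; 3; 7]; [:: 0; 1; 5; 9]; [:: 0; 1; 6; 8]; [:: 0; 2; 3; 8]; [:: 0; 2; 5; 7]; [:: 0; 2; 6; 9]; [:: 0; 3; 4; 9]; [:: 0; 3; 5; 6]; [:: 0; 4; 5; 8]; [:: 0; 4; 6; 7]; [:: 0; 7; 8; 9]; [:: 1; 2; 3; 9]; [:: 1; 2; 5; 6]; [:: 1; 2; 7; 8]; [:: 1; 3; 4; 6]; [:: 1; 3; 5; 8]; [:: 1; 4; 5; 7]; [:: 1; 4; 8; 9]; [:: 1; 6; 7; 9]; [:: 2; 3; 4; 5]; [:: 2; 3; 6; 7]; [:: 2; 4; 6; 8]; [:: 2; 4; 7; 9]; [:: 2; 5; 8; 9]; [:: 3; 4; 7; 8]; [:: 3; 5; 7; 9]; [:: 3; 6; 8; 9]; [:: 4; 5; 6; 9]; [:: 5; 6; 7; 8]];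
 [:: [:: 0; 1; 2; 8]; [:: 0; 1; 3; 9]; [:: 0; 1; 4; 6]; [:: 0; 1; 5; 7]; [:: 0; 2; 3; 6]; [:: 0; 2; 4; 5]; [:: 0; 2; 7; 9]; [:: 0; 3; 4; 7]; [:: 0; 3; 5; 8]; [:: 0; 4; 8; 9]; [:: 0; 5; 6; 9]; [:: 0; 6; 7; 8]; [:: 1; 2; 3; 5]; [:: 1; 2; 4; 7]; [:: 1; 2; 6; 9]; [:: 1; 3; 4; 8]; [:: 1; 3; 6; 7]; [:: 1; 4; 5; 9]; [:: 1; 5; 6; 8]; [:: 1; 7; 8; 9]; [:: 2; 3; 4; 9]; [:: 2; 3; 7; 8]; [:: 2; 4; 6; 8]; [:: 2; 5; 6; 7]; [:: 2; 5; 8; 9]; [:: 3; 4; 5; 6]; [:: 3; 5; 7; 9]; [:: 3; 6; 8; 9]; [:: 4; 5; 7; 8]; [:: 4; 6; 7; 9]];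
 [:: [:: 0; 1; 2; 5]; [:: 0; 1; 3; 4]; [:: 0; 1; 6; 9]; [:: 0; 1; 7; 8]; [:: 0; 2; 3; 9]; [:: 0; 2; 4; 7]; [:: 0; 2; 6; 8]; [:: 0; 3; 5; 8]; [:: 0; 3; 6; 7]; [:: 0; 4; 5; 6]; [:: 0; 4; 8; 9]; [:: 0; 5; 7; 9]; [:: 1; 2; 3; 8]; [:: 1; 2; 4; 9]; [:: 1; 2; 6; 7]; [:: 1; 3; 5; 6]; [:: 1; 3; 7; 9]; [:: 1; 4; 5; 7]; [:: 1; 4; 6; 8]; [:: 1; 5; 8; 9]; [:: 2; 3; 4; 6]; [:: 2; 3; 5; 7]; [:: 2; 4; 5; 8]; [:: 2; 5; 6; 9]; [:: 2; 7; 8; 9]; [:: 3; 4; 5; 9]; [:: 3; 4; 7; 8]; [:: 3; 6; 8; 9]; [:: 4; 6; 7; 9]; [:: 5; 6; 7; 8]];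
 [:: [:: 0; 1; 2; 7]; [:: 0; 1; 3; 8]; [:: 0; 1; 4; 6]; [:: 0; 1; 5; 9]; [:: 0; 2; 3; 6]; [:: 0; 2; 4; 5]; [:: 0; 2; 8; 9]; [:: 0; 3; 4; 9]; [:: 0; 3; 5; 7]; [:: 0; 4; 7; 8]; [:: 0; 5; 6; 8]; [:: 0; 6; 7; 9]; [:: 1; 2; 3; 5]; [:: 1; 2; 4; 9]; [:: 1; 2; 6; 8]; [:: 1; 3; 4; 7]; [:: 1; 3; 6; 9]; [:: 1; 4; 5; 8]; [:: 1; 5; 6; 7]; [:: 1; 7; 8; 9]; [:: 2; 3; 4; 8]; [:: 2; 3; 7; 9]; [:: 2; 4; 6; 7]; [:: 2; 5; 6; 9]; [:: 2; 5; 7; 8]; [:: 3; 4; 5; 6]; [:: 3; 5; 8; 9]; [:: 3; 6; 7; 8]; [:: 4; 5; 7; 9]; [:: 4; 6; 8; 9]];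
 [:: [:: 0; 1; 2; 5]; [:: 0; 1; 3; 4]; [:: 0; 1; 6; 8]; [:: 0; 1; 7; 9]; [:: 0; 2; 3; 8]; [:: 0; 2; 4; 9]; [:: 0; 2; 6; 7]; [:: 0; 3; 5; 7]; [:: 0; 3; 6; 9]; [:: 0; 4; 5; 6]; [:: 0; 4; 7; 8]; [:: 0; 5; 8; 9]; [:: 1; 2; 3; 7]; [:: 1; 2; 4; 8]; [:: 1; 2; 6; 9]; [:: 1; 3; 5; 6]; [:: 1; 3; 8; 9]; [:: 1; 4; 5; 9]; [:: 1; 4; 6; 7]; [:: 1; 5; 7; 8]; [:: 2; 3; 4; 6]; [:: 2; 3; 5; 9]; [:: 2; 4; 5; 7]; [:: 2; 5; 6; 8]; [:: 2; 7; 8; 9]; [:: 3; 4; 5; 8]; [:: 3; 4; 7; 9]; [:: 3; 6; 7; 8]; [:: 4; 6; 8; 9]; [:: 5; 6; 7; 9]];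
 [:: [:: 0; 1; 2; 8]; [:: 0; 1; 3; 7]; [:: 0; 1; 4; 9]; [:: 0; 1; 5; 6]; [:: 0; 2; 3; 9]; [:: 0; 2; 4; 6]; [:: 0; 2; 5; 7]; [:: 0; 3; 4; 5]; [:: 0; 3; 6; 8]; [:: 0; 4; 7; 8]; [:: 0; 5; 8; 9]; [:: 0; 6; 7; 9]; [:: 1; 2; 3; 6]; [:: 1; 2; 4; 5]; [:: 1; 2; 7; 9]; [:: 1; 3; 4; 8]; [:: 1; 3; 5; 9]; [:: 1; 4; 6; 7]; [:: 1; 5; 7; 8]; [:: 1; 6; 8; 9]; [:: 2; 3; 4; 7]; [:: 2; 3; 5; 8]; [:: 2; 4; 8; 9]; [:: 2; 5; 6; 9]; [:: 2; 6; 7; 8]; [:: 3; 4; 6; 9]; [:: 3; 5; 6; 7]; [:: 3; 7; 8; 9]; [:: 4; 5; 6; 8]; [:: 4; 5; 7; 9]];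
 [:: [:: 0; 1; 2; 6]; [:: 0; 1; 3; 5]; [:: 0; 1; 4; 8]; [:: 0; 1; 7; 9]; [:: 0; 2; 3; 4]; [:: 0; 2; 5; 7]; [:: 0; 2; 8; 9]; [:: 0; 3; 6; 9]; [:: 0; 3; 7; 8]; [:: 0; 4; 5; 9]; [:: 0; 4; 6; 7]; [:: 0; 5; 6; 8]; [:: 1; 2; 3; 8]; [:: 1; 2; 4; 7]; [:: 1; 2; 5; 9]; [:: 1; 3; 4; 9]; [:: 1; 3; 6; 7]; [:: 1; 4; 5; 6]; [:: 1; 5; 7; 8]; [:: 1; 6; 8; 9]; [:: 2; 3; 5; 6]; [:: 2; 3; 7; 9]; [:: 2; 4; 5; 8]; [:: 2; 4; 6; 9]; [:: 2; 6; 7; 8]; [:: 3; 4; 5; 7]; [:: 3; 4; 6; 8]; [:: 3; 5; 8; 9]; [:: 4; 7; 8; 9]; [:: 5; 6; 7; 9]];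
 [:: [:: 0; 1; 2; 3]; [:: 0; 1; 4; 9]; [:: 0; 1; 5; 7]; [:: 0; 1; 6; 8]; [:: 0; 2; 4; 7]; [:: 0; 2; 5; 6]; [:: 0; 2; 8; 9]; [:: 0; 3; 4; 6]; [:: 0; 3; 5; 9]; [:: 0; 3; 7; 8]; [:: 0; 4; 5; 8]; [:: 0; 6; 7; 9]; [:: 1; 2; 4; 6]; [:: 1; 2; 5; 8]; [:: 1; 2; 7; 9]; [:: 1; 3; 4; 5]; [:: 1; 3; 6; 7]; [:: 1; 3; 8; 9]; [:: 1; 4; 7; 8]; [:: 1; 5; 6; 9]; [:: 2; 3; 4; 8]; [:: 2; 3; 5; 7]; [:: 2; 3; 6; 9]; [:: 2; 4; 5; 9]; [:: 2; 6; 7; 8]; [:: 3; 4; 7; 9]; [:: 3; 5; 6; 8]; [:: 4; 5; 6; 7]; [:: 4; 6; 8; 9]; [:: 5; 7; 8; 9]];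
 [:: [:: 0; 1; 2; 8]; [:: 0; 1; 3; 6]; [:: 0; 1; 4; 5]; [:: 0; 1; 7; 9]; [:: 0; 2; 3; 5]; [:: 0; 2; 4; 7]; [:: 0; 2; 6; 9]; [:: 0; 3; 4; 9]; [:: 0; 3; 7; 8]; [:: 0; 4; 6; 8]; [:: 0; 5; 6; 7]; [:: 0; 5; 8; 9]; [:: 1; 2; 3; 4]; [:: 1; 2; 5; 9]; [:: 1; 2; 6; 7]; [:: 1; 3; 5; 7]; [:: 1; 3; 8; 9]; [:: 1; 4; 6; 9]; [:: 1; 4; 7; 8]; [:: 1; 5; 6; 8]; [:: 2; 3; 6; 8]; [:: 2; 3; 7; 9]; [:: 2; 4; 5; 6]; [:: 2; 4; 8; 9]; [:: 2; 5; 7; 8]; [:: 3; 4; 5; 8]; [:: 3; 4; 6; 7]; [:: 3; 5; 6; 9]; [:: 4; 5; 7; 9]; [:: 6; 7; 8; 9]];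
 [:: [:: 0; 1; 2; 4]; [:: 0; 1; 3; 9]; [:: 0; 1; 5; 8]; [:: 0; 1; 6; 7]; [:: 0; 2; 3; 7]; [:: 0; 2; 5; 9]; [:: 0; 2; 6; 8]; [:: 0; 3; 4; 8]; [:: 0; 3; 5; 6]; [:: 0; 4; 5; 7]; [:: 0; 4; 6; 9]; [:: 0; 7; 8; 9]; [:: 1; 2; 3; 8]; [:: 1; 2; 5; 6]; [:: 1; 2; 7; 9]; [:: 1; 3; 4; 6]; [:: 1; 3; 5; 7]; [:: 1; 4; 5; 9]; [:: 1; 4; 7; 8]; [:: 1; 6; 8; 9]; [:: 2; 3; 4; 5]; [:: 2; 3; 6; 9]; [:: 2; 4; 6; 7]; [:: 2; 4; 8; 9]; [:: 2; 5; 7; 8]; [:: 3; 4; 7; 9]; [:: 3; 5; 8; 9]; [:: 3; 6; 7; 8]; [:: 4; 5; 6; 8]; [:: 5; 6; 7; 9]]].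

Lemma large_set_multb_3_4_10_mu2 : large_set_multb 10 3 4 2 ls_3_4_10_mu2.
Proof. by vm_compute. Qed.

Lemma large_set_multb_3_4_10_mu3 : large_set_multb 10 3 4 3 ls_3_4_10_mu3.
Proof. by vm_compute. Qed.

Theorem theorem16 (mu : nat) : 2 <= mu ->
  exists L : seq {set {set 'I_10}}, large_set_mult 3 4 10 mu L.
Proof.
move: mu; apply: large_set_mult_ge2.
  by eexists; apply: large_set_multb_sound large_set_multb_3_4_10_mu2.
by eexists; apply: large_set_multb_sound large_set_multb_3_4_10_mu3.
Qed.
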